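(* Let $n \ge 1$ and $t$ be integers with $1 \le t < \frac{n+1}{2}$. Then the cross-blockchain transaction task $(\mathcal{I}, \mathcal{O}, \Delta)$ on $n+1$ blockchains, defined in the context, has no $t$-resilient protocol in the asynchronous message-passing model with crash failures. That is, no such protocol can guarantee that all local transactions end either all committed or all aborted, in accordance with the carrier map $\Delta$.
   Context: Setting. There are $n+1$ distinct blockchains $C_0,\dots,C_n$. An $(n+1)$-party cross-blockchain transaction touches exactly one block $v_i$ on each blockchain $C_i$. Input complex $\mathcal{I}$. The vertices are the $3(n+1)$ pairs $(v_i, a)$ with $0 \le i \le n$ and $a \in \{0,1,\bot\}$. Here $0$ means the local transaction is not committed, $1$ means it is committed, and $\bot$ means the block's branch was suspended by a fork. A nonempty set of vertices is a simplex if and only if its vertices involve pairwise distinct blocks. Output complex $\mathcal{O}$. The vertices are the pairs $(v_i, b)$ with $b \in \{0,1\}$, where $1$ means committed and $0$ means aborted. A nonempty set of vertices is a simplex if and only if its vertices involve pairwise distinct blocks and all carry the same value $b$. Carrier map $\Delta$. For a simplex $\sigma$ of $\mathcal{I}$ with block set $B(\sigma)$: - $\Delta(\sigma)$ is the simplex $\{(v,1): v \in B(\sigma)\}$ with its faces, if all input values in $\sigma$ are $1$; - it is $\{(v,0): v\in B(\sigma)\}$ with its faces, if some input value in $\sigma$ is $\bot$; - otherwise it is the subcomplex of $\mathcal{O}$ consisting of all simplices whose blocks lie in $B(\sigma)$, i.e. both the all-$0$ and the all-$1$ simplices on $B(\sigma)$ and their faces. Computational model. There are $n+1$ processes (process $i$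 corresponds to blockchain $C_i$) communicating by asynchronous message passing, with at most $t$ of them failing by crashing. Process $i$ starts with input vertex $(v_i,a_i)$ of $\mathcal{I}$. A $t$-resilient protocol solves the task if, in every execution with at most $t$ crashes, each non-crashed process $i$ eventually decides an output vertex $(v_i,b_i)$ of $\mathcal{O}$, and the set of decided vertices is a simplex of $\Delta(\sigma)$, where $\sigma$ is the simplex of inputs of the participating processes. *)

From Stdlib Require List.
From mathcomp Require Import all_boot.

Set Implicit Arguments.
Unset Strict Implicit.
Unset Printing Implicit Defensive.

(* Input values: [Some false] = 0 (not committed), [Some true] = 1 (committed),
   [None] = bot (branch suspended by a fork). *)
Definition inval := option bool.
Definition in0 : inval := Some false.
Definition in1 : inval := Some true.
Definition inbot : inval := None.

(* The complexes and the carrier map.  Process / blockchain i <-> block v_i,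
   so a vertex (v_i, a) is represented by the pair (i, a).             *)

Definition blocksI N (s : {set 'I_N * inval}) : {set 'I_N} := [set x.1 | x in s].
Definition blocksO N (s : {set 'I_N * bool}) : {set 'I_N} := [set x.1 | x in s].

Definition input_simplex N (s : {set 'I_N * inval}) : bool :=
  (s != set0) && [forall x in s, forall y in s, (x.1 == y.1) ==> (x == y)].

Definition output_simplex N (s : {set 'I_N * bool}) : bool :=
  [&& s != set0,
      [forall x in s, forall y in s, (x.1 == y.1) ==> (x == y)] &
      [forall x in s, forall y in s, x.2 == y.2]].

Definition Delta N (sigma : {set 'I_N * inval}) (tau : {set 'I_N * bool}) : bool :=
  [&& output_simplex tau,
      blocksO tau \subset blocksI sigma &
      if [forall x in sigma, x.2 == in1] then [forall y in tau, y.2 == true]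
      else if [exists x in sigma, x.2 == inbot] then [forall y in tau, y.2 == false]
      else true].

Record protocol (N : nat) : Type := Protocol {
  pstate : Type;
  pmsg : Type;
  pinit : 'I_N -> inval -> pstate;
  (* a step of process i: from its state and the received message
     (None = no message delivered), new state and messages sent (dest, msg) *)
  pstep : 'I_N -> pstate -> option pmsg -> pstate * seq ('I_N * pmsg);
  pdecide : pstate -> option bool }.

(* global configuration: local states and the messages in transit,
   each in-transit message tagged with a unique identifier *)
Record config (N : nat) (S M : Type) := Config {
  cst : 'I_N -> S;
  cnet : seq ((nat * nat) * 'I_N * M) }.

Definition tag_out N M (k : nat) (out : seq ('I_N * M)) :
  seq ((nat * nat) * 'I_N * M) :=
  [seq ((k, jx.1), jx.2.1, jx.2.2) | jx <- zip (iota 0 (size out)) out].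

Definition upd N S (f : 'I_N -> S) (p : 'I_N) (s : S) : 'I_N -> S :=
  fun q => if q == p then s else f q.

Inductive step N (P : protocol N) (k : nat) :
  config N (pstate P) (pmsg P) -> 'I_N -> config N (pstate P) (pmsg P) -> Prop :=
| StepNull (c : config N (pstate P) (pmsg P)) (p : 'I_N) :
    step k c p
      (Config (upd (cst c) p (@pstep N P p (cst c p) None).1)
              (cnet c ++ tag_out k (@pstep N P p (cst c p) None).2))
| StepRecv (c : config N (pstate P) (pmsg P)) (p : 'I_N) (id : nat * nat) (m : pmsg P) :
    List.In (id, p, m) (cnet c) ->
    step k c p
      (Config (upd (cst c) p (@pstep N P p (cst c p) (Some m)).1)
              ([seq e <- cnet c | e.1.1 != id] ++ tag_out k (@pstep N P p (cst c p) (Some m)).2)).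

Definition run N (P : protocol N) (a : 'I_N -> inval)
  (c : nat -> config N (pstate P) (pmsg P)) (who : nat -> 'I_N) : Prop :=
  c 0 = Config (fun i => @pinit N P i (a i)) [::] /\
  forall k, @step N P k (c k) (who k) (c k.+1).

(* a correct (non-crashed) process takes infinitely many steps *)
Definition correct N (who : nat -> 'I_N) (p : 'I_N) : Prop :=
  forall k, exists2 k', k <= k' & who k' = p.

Definition participates N (who : nat -> 'I_N) (p : 'I_N) : Prop :=
  exists k, who k = p.

Definition admissible N (P : protocol N) (t : nat)
  (c : nat -> config N (pstate P) (pmsg P)) (who : nat -> 'I_N) : Prop :=
  (exists F : {set 'I_N}, #|F| <= t /\ forall p, p \notin F -> correct who p) /\
  (forall k id p m, List.In (id, p, m) (cnet (c k)) -> correct who p ->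
     exists2 k', k <= k' & ~ List.In (id, p, m) (cnet (c k'))).

Definition decides N (P : protocol N)
  (c : nat -> config N (pstate P) (pmsg P)) (who : nat -> 'I_N) (p : 'I_N) (b : bool) : Prop :=
  exists k, who k = p /\ @pdecide N P (cst (c k.+1) p) = Some b.

Definition solves_xchain N (t : nat) (P : protocol N) : Prop :=
  forall (a : 'I_N -> inval) c who, @run N P a c who -> @admissible N P t c who ->
    (forall p, correct who p -> exists b, @decides N P c who p b) /\
    (forall (Part : {set 'I_N}) (D : {set 'I_N * bool}),
       (forall p, p \in Part <-> participates who p) ->
       (forall x, x \in D <-> @decides N P c who x.1 x.2) ->
       D != set0 ->
       Delta [set (p, a p) | p in Part] D).

(* Give process 0 the input ⊥ and every other process the input 1.  In a run
   where process 0 never moves (a legal crash, since t >= 1) some other process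
   p1 must still decide, and as every participant has input 1 it must commit.
   Now let process 0 take a single step right after that decision: the prefix
   seen by p1 is unchanged, so p1 still commits, but a ⊥ input participates
   and Δ forces everyone to abort.  A single crash suffices. *)

From Stdlib Require List.
From mathcomp Require Import all_boot zify boolp.

Set Implicit Arguments.
Unset Strict Implicit.
Unset Printing Implicit Defensive.

Section ListIn.
Variable T : Type.
Implicit Types (x : T) (a : pred T) (s : seq T).

Lemma In_cat x s1 s2 : List.In x (s1 ++ s2) <-> List.In x s1 \/ List.In x s2.
Proof. exact: List.in_app_iff. Qed.

Lemma In_filter a x s : List.In x (filter a s) <-> List.In x s /\ a x.
Proof. exact: List.filter_In. Qed.

Lemma all_In a s : all a s <-> forall x, List.In x s -> a x.
Proof. exact: List.forallb_forall. Qed.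

Lemma has_In a s : has a s <-> exists x, List.In x s /\ a x.
Proof. exact: List.existsb_exists. Qed.

End ListIn.

Lemma has_filter_predI T (a r : pred T) s : has a (filter r s) = has (predI a r) s.
Proof. by rewrite !has_count count_filter. Qed.

Lemma find_filter_le T (a r : pred T) s :
  (forall x, a x -> r x) -> find a (filter r s) <= find a s.
Proof.
move=> sub_ar; elim: s => [|x s IHs] //=.
case: ifP => [_ /=|rx]; first by case: (a x).
case: ifP => [/sub_ar|_]; first by rewrite rx.
exact: leqW.
Qed.

Lemma descent_to0 (f : nat -> nat) (D : pred nat) k0 :
  (forall k, k0 <= k -> f k.+1 <= f k - D k) ->
  (forall k, exists2 o, k <= o & D o) ->
  exists2 k, k0 <= k & f k = 0.
Proof.
move=> f_dec D_inf.
have f_mono k j : k0 <= k -> f (k + j) <= f k.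
  move=> k0_k; elim: j => [|j IHj]; first by rewrite addn0.
  rewrite addnS; apply: leq_trans IHj; apply: leq_trans (leq_subr (D (k + j)) _).
  by apply: f_dec; exact: leq_trans (leq_addr _ _).
suff /(_ (f k0) k0 (leqnn _) (leqnn _)) : forall m k, k0 <= k -> f k <= m ->
    exists2 k', k <= k' & f k' = 0.
  by case=> k' k0_k' fk'; exists k'.
elim=> [|m IHm] k k0_k fk_le; first by exists k => //; apply/eqP; rewrite -leqn0.
have [o k_o Do] := D_inf k.
have k0_o : k0 <= o := leq_trans k0_k k_o.
have fo_le : f o <= f k by rewrite -(subnKC k_o); exact: f_mono.
have [fo0|fo_gt0] := posnP (f o); first by exists o.
have [|k' o_k' fk'0] := IHm o.+1 (leq_trans k0_o (leqnSn o)).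
  by have := f_dec o k0_o; rewrite Do /=; lia.
by exists k' => //; apply: leq_trans k_o (ltnW o_k').
Qed.

Section Pending.
Variables (n : nat) (M : Type).
Notation msg := ((nat * nat) * 'I_n.+1 * M)%type.
Implicit Types (e : msg) (s : seq msg) (id : nat * nat).

Definition live_dest e : bool := e.1.2 != ord0.

Definition has_id id e : bool := e.1.1 == id.

(* Termination measure for the delivery of the message [id]. *)
Definition pending id s : nat :=
  let s' := [seq e <- s | live_dest e] in
  if has (has_id id) s' then (find (has_id id) s').+1 else 0.

Lemma pending_cat_fresh id k s (out : seq ('I_n.+1 * M)) :
  id.1 != k -> pending id (s ++ tag_out k out) = pending id s.
Proof.
move=> fresh; have no_id : has (has_id id) [seq e <- tag_out k out | live_dest e] = false.
  apply/negbTE; rewrite -all_predC all_filter /tag_out all_map.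
  apply/all_In => -[j x] _ /=; apply/implyP => _; rewrite /has_id /=.
  by apply: contra fresh => /eqP <-.
rewrite /pending filter_cat has_cat find_cat no_id orbF.
by case: (has (has_id id) _).
Qed.

Lemma pending_gt0 id p m s :
  List.In (id, p, m) s -> p != ord0 -> 0 < pending id s.
Proof.
move=> in_s p_nz; rewrite /pending.
have -> // : has (has_id id) [seq e <- s | live_dest e].
apply/has_In; exists (id, p, m); split; last exact: eqxx.
exact/In_filter.
Qed.

(* Delivering the first live message [e] removes every message carrying its
   identifier, so [id] either disappears or moves one place forward. *)
Lemma pending_deliver id s e rest :
  [seq x <- s | live_dest x] = e :: rest ->
  pending id [seq x <- s | x.1.1 != e.1.1] <= pending id s - 1.
Proof.
move=> live_s; rewrite /pending.
have -> : [seq x <- [seq x <- s | x.1.1 != e.1.1] | live_dest x] =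
          [seq x <- rest | x.1.1 != e.1.1].
  have -> : [seq x <- rest | x.1.1 != e.1.1] = [seq x <- e :: rest | x.1.1 != e.1.1].
    by rewrite /= eqxx.
  rewrite -live_s -!filter_predI; apply: eq_filter => x /=; exact: andbC.
rewrite live_s /= has_filter_predI.
case e_id: (has_id id e) => /=.
  rewrite (@eq_has _ _ pred0) ?has_pred0 // => x /=.
  by rewrite /has_id -(eqP e_id) andbN.
have id_ne : id != e.1.1 by rewrite eq_sym; exact: negbT e_id.
rewrite (@eq_has _ _ (has_id id)); last first.
  by move=> x /=; case x_id: (has_id id x); rewrite //= (eqP x_id).
case: ifP => //= _; rewrite subn1 /= ltnS.
by apply: find_filter_le => x /eqP ->.
Qed.

End Pending.

Definition round_robin n k : 'I_n.+1 := inord (k./2 %% n).+1.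

Lemma round_robin_nz n k : 0 < n -> round_robin n k != ord0.
Proof. by move=> n_gt0; rewrite -val_eqE /= inordK // ltnS ltn_pmod. Qed.

Lemma round_robin_visits n (p : 'I_n.+1) j :
  p != ord0 -> round_robin n (j * n + p.-1).*2 = p.
Proof.
move=> p_nz; have p_gt0 : 0 < p by rewrite lt0n; rewrite -val_eqE in p_nz.
have p_le : p.-1 < n by rewrite -ltnS prednK ?ltn_ord.
apply: val_inj; rewrite /round_robin /=.
rewrite inordK; last by rewrite ltnS ltn_pmod // (leq_ltn_trans _ p_le).
by rewrite doubleK modnMDl modn_small // prednK.
Qed.

Section Scheduler.
Variables (n : nat) (P : protocol n.+1) (a : 'I_n.+1 -> inval).
Notation cfg := (config n.+1 (pstate P) (pmsg P)).

Definition null_step k (c : cfg) p : cfg :=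
  Config (upd (cst c) p (pstep p (cst c p) None).1)
         (cnet c ++ tag_out k (pstep p (cst c p) None).2).

Definition recv_step k (c : cfg) p id m : cfg :=
  Config (upd (cst c) p (pstep p (cst c p) (Some m)).1)
         ([seq e <- cnet c | e.1.1 != id] ++ tag_out k (pstep p (cst c p) (Some m)).2).

(* Process 0 moves only at step [K] when [wake = Some K]; otherwise odd steps
   deliver the oldest message addressed to another process, and even steps
   let processes 1, ..., n take null steps in turn. *)
Definition sched_step (wake : option nat) k (c : cfg) : 'I_n.+1 * cfg :=
  if wake == Some k then (ord0, null_step k c ord0)
  else if odd k then
    if [seq e <- cnet c | live_dest e] is e :: _
    then (e.1.2, recv_step k c e.1.2 e.1.1 e.2)
    else (round_robin n k, null_step k c (round_robin n k))
  else (round_robin n k, null_step k c (round_robin n k)).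

Fixpoint sched_cfg (wake : option nat) k : cfg :=
  if k is k'.+1 then (sched_step wake k' (sched_cfg wake k')).2
  else Config (fun i => pinit P i (a i)) [::].

Definition sched_who (wake : option nat) k : 'I_n.+1 :=
  (sched_step wake k (sched_cfg wake k)).1.

Lemma sched_cfgS wake k :
  sched_cfg wake k.+1 = (sched_step wake k (sched_cfg wake k)).2.
Proof. by []. Qed.

Lemma sched_run wake : run a (sched_cfg wake) (sched_who wake).
Proof.
split=> // k; rewrite /sched_who /=; set c := sched_cfg wake k.
rewrite /sched_step; case: ifP => _; first exact: StepNull.
case: ifP => _; last exact: StepNull.
case live_c: [seq e <- cnet c | live_dest e] => [|[[id p] m] rest].
  exact: StepNull.
apply: StepRecv.
suff /In_filter[] : List.In (id, p, m) [seq e <- cnet c | live_dest e] by [].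
by rewrite live_c; left.
Qed.

Lemma sched_tag_lt wake k e : List.In e (cnet (sched_cfg wake k)) -> e.1.1.1 < k.
Proof.
elim: k e => [|k IHk] e //=; set c := sched_cfg wake k.
have tag_k out : List.In e (tag_out k out) -> e.1.1.1 < k.+1.
  by rewrite /tag_out => /List.in_map_iff[x [<- _]].
have null_lt p : List.In e (cnet (null_step k c p)) -> e.1.1.1 < k.+1.
  by case/In_cat => [/IHk/leqW|/tag_k].
rewrite /sched_step; case: ifP => _; first exact: null_lt.
case: ifP => _; last exact: null_lt.
case: [seq e <- cnet c | live_dest e] => [|e' _]; first exact: null_lt.
by case/In_cat => [/In_filter[/IHk/leqW] | /tag_k].
Qed.

Lemma sched_pending_step wake id k : id.1 < k ->
  pending id (cnet (sched_cfg wake k.+1)) <=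
  pending id (cnet (sched_cfg wake k)) - (odd k && (wake != Some k)).
Proof.
move=> id_lt; have fresh : id.1 != k by rewrite neq_ltn id_lt.
rewrite /=; set c := sched_cfg wake k; rewrite /sched_step.
case: (wake =P Some k) => _ /=; first by rewrite andbF subn0 pending_cat_fresh.
rewrite andbT; case: ifP => _ /=; last by rewrite subn0 pending_cat_fresh.
case live_c: [seq e <- cnet c | live_dest e] => [|e rest] /=.
  by rewrite pending_cat_fresh // /pending live_c.
by rewrite pending_cat_fresh //; exact: pending_deliver live_c.
Qed.

Lemma sched_who_wake K : sched_who (Some K) K = ord0.
Proof. by rewrite /sched_who /sched_step eqxx. Qed.

Lemma sched_who_eq0 wake k : 0 < n -> sched_who wake k = ord0 -> wake = Some k.
Proof.
move=> n_gt0; rewrite /sched_who /sched_step; case: eqP => // _.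
have rr_nz := round_robin_nz k n_gt0.
case: ifP => _ /=; last by move/eqP: rr_nz.
case live_c: [seq e <- cnet (sched_cfg wake k) | live_dest e] => [|e rest] /=.
  by move/eqP: rr_nz.
move=> e_0.
suff /In_filter[_] : List.In e [seq e <- cnet (sched_cfg wake k) | live_dest e].
  by rewrite /live_dest e_0 eqxx.
by rewrite live_c; left.
Qed.

Lemma exists_odd_step wake k : exists2 o, k <= o & odd o && (wake != Some o).
Proof.
case: (wake =P Some k.*2.+1) => [-> | /eqP wake_ne]; last first.
  by exists k.*2.+1; rewrite ?wake_ne /= ?odd_double //; rewrite -addnn; lia.
exists k.*2.+3; first by rewrite -addnn; lia.
by rewrite /= odd_double; apply/eqP => -[]; lia.
Qed.

Lemma sched_delivers wake k id p m : p != ord0 ->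
  List.In (id, p, m) (cnet (sched_cfg wake k)) ->
  exists2 k', k <= k' & ~ List.In (id, p, m) (cnet (sched_cfg wake k')).
Proof.
move=> p_nz in_k; have id_lt := sched_tag_lt in_k.
have [|k' k_k' pending0] := @descent_to0 (fun j => pending id (cnet (sched_cfg wake j)))
    (fun j => odd j && (wake != Some j)) k _ (exists_odd_step wake).
  by move=> j k_j; apply: sched_pending_step; exact: leq_trans k_j.
by exists k' => // in_k'; have := pending_gt0 in_k' p_nz; rewrite pending0.
Qed.

Lemma sched_correct wake p : 0 < n -> p != ord0 -> correct (sched_who wake) p.
Proof.
move=> n_gt0 p_nz k0; pose s j := (j * n + p.-1).*2.
have s_ge j : j <= s j.
  rewrite /s -addnn; have := leq_pmulr j n_gt0; lia.
have s_inj : injective s.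
  by move=> i j /double_inj/addIn/eqP; rewrite eqn_pmul2r // => /eqP.
have who_s j : wake != Some (s j) -> sched_who wake (s j) = p.
  move=> wake_ne; rewrite /sched_who /sched_step (negbTE wake_ne) odd_double.
  exact: round_robin_visits.
case: (wake =P Some (s k0)) => [wake_s | /eqP wake_ne]; last first.
  by exists (s k0); [exact: s_ge | exact: who_s].
exists (s k0.+1); first exact: leq_trans (leqnSn k0) (s_ge _).
apply: who_s; rewrite wake_s; apply/eqP => -[/s_inj/eqP].
by rewrite eq_sym (gtn_eqF (ltnSn k0)).
Qed.

Lemma sched_not_correct0 wake : 0 < n -> ~ correct (sched_who wake) ord0.
Proof.
move=> n_gt0 correct0.
have [k' lt_k' /(sched_who_eq0 n_gt0) wake_k'] :=
  correct0 (if wake is Some K then K.+1 else 0).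
by move: lt_k'; rewrite wake_k' ltnn.
Qed.

Lemma sched_admissible wake t : 0 < n -> 0 < t ->
  admissible t (sched_cfg wake) (sched_who wake).
Proof.
move=> n_gt0 t_gt0; split.
  exists [set ord0]; rewrite cards1; split=> // p.
  by rewrite in_set1; exact: sched_correct.
move=> k id p m in_k p_correct; apply: sched_delivers in_k.
by apply: contraPneq p_correct => ->; exact: sched_not_correct0.
Qed.

Lemma sched_step_asleep wake k c :
  wake != Some k -> sched_step wake k c = sched_step None k c.
Proof. by rewrite /sched_step => /negbTE ->. Qed.

Lemma sched_cfg_prefix K k : k <= K -> sched_cfg (Some K) k = sched_cfg None k.
Proof.
elim: k => [//|k IHk] lt_kK; rewrite !sched_cfgS IHk; last exact: ltnW.
rewrite sched_step_asleep //; apply/eqP => -[K_k].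
by rewrite K_k ltnn in lt_kK.
Qed.

Lemma sched_who_prefix K k : k < K -> sched_who (Some K) k = sched_who None k.
Proof.
move=> lt_kK; rewrite /sched_who sched_cfg_prefix; last exact: ltnW.
rewrite sched_step_asleep //; apply/eqP => -[K_k].
by rewrite K_k ltnn in lt_kK.
Qed.

End Scheduler.

Lemma Delta_all_committed N (sigma : {set 'I_N * inval}) tau :
  Delta sigma tau -> (forall x, x \in sigma -> x.2 = in1) ->
  forall y, y \in tau -> y.2.
Proof.
move=> /and3P[_ _] + all1; case: ifP => [_ /forall_inP all_true y /all_true/eqP //|].
by move=> /negbT/forall_inPn[x /all1 ->].
Qed.

Lemma Delta_suspended N (sigma : {set 'I_N * inval}) tau x :
  Delta sigma tau -> x \in sigma -> x.2 = inbot ->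
  forall y, y \in tau -> ~~ y.2.
Proof.
move=> /and3P[_ _] + x_in x_bot.
case: ifP => [/forall_inP/(_ x x_in)|_]; first by rewrite x_bot.
case: ifP => [_ /forall_inP all_false y /all_false/eqP -> //|].
by move=> /negbT/exists_inPn/(_ x x_in); rewrite x_bot.
Qed.

Section Solver.
Variables (N t : nat) (P : protocol N) (a : 'I_N -> inval).
Variables (c : nat -> config N (pstate P) (pmsg P)) (who : nat -> 'I_N).
Hypotheses (solves : solves_xchain t P) (runs : run a c who) (adm : admissible t c who).

Definition participants : {set 'I_N} := [set p | `[< participates who p >]].
Definition decisions : {set 'I_N * bool} := [set x | `[< decides c who x.1 x.2 >]].

Lemma Delta_decisions p b : decides c who p b ->
  Delta [set (q, a q) | q in participants] decisions.
Proof.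
move=> dec; apply: (solves runs adm).2 => [q|x|]; rewrite ?inE; try by split=> /asboolP.
by apply/set0Pn; exists (p, b); rewrite inE; exact/asboolP.
Qed.

Lemma decides_committed p b :
  (forall q, participates who q -> a q = in1) -> decides c who p b -> b.
Proof.
move=> all1 dec; apply: (Delta_all_committed (Delta_decisions dec) _ (y := (p, b))).
  by move=> _ /imsetP[q /[!inE] /asboolP/all1 a_q ->].
by rewrite inE; exact/asboolP.
Qed.

Lemma decides_aborted q p b :
  participates who q -> a q = inbot -> decides c who p b -> ~~ b.
Proof.
move=> q_part a_q dec.
apply: (Delta_suspended (x := (q, a q)) (Delta_decisions dec) _ _ (y := (p, b))) => //.
  by apply/imsetP; exists q; rewrite ?inE; first exact/asboolP.
by rewrite inE; exact/asboolP.
Qed.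

End Solver.

Theorem proposition1 (n t : nat) :
  1 <= n -> 1 <= t -> 2 * t < n + 1 ->
  ~ exists P : protocol n.+1, solves_xchain t P.
Proof.
move=> n_gt0 t_gt0 _ [P solves].
pose a (i : 'I_n.+1) := if i == ord0 then inbot else in1.
pose p1 : 'I_n.+1 := inord 1.
have p1_nz : p1 != ord0 by rewrite -val_eqE /= inordK.
have runs wake := sched_run P a wake.
have adm wake := sched_admissible P a wake n_gt0 t_gt0.
have [b dec_silent] :=
  (solves _ _ _ (runs None) (adm None)).1 p1 (sched_correct P a None n_gt0 p1_nz).
have committed : b.
  apply: (decides_committed solves (runs None) (adm None) _ dec_silent).
  move=> q [j who_j]; rewrite /a; case: eqP => // q0.
  by move: who_j; rewrite q0 => /(sched_who_eq0 n_gt0).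
have [k [who_k dec_k]] := dec_silent.
have aborted : ~~ b.
  apply: (decides_aborted solves (runs (Some k.+1)) (adm (Some k.+1))
           (q := ord0) (p := p1)).
  - by exists k.+1; exact: sched_who_wake.
  - by rewrite /a eqxx.
  - by exists k; rewrite sched_who_prefix // sched_cfg_prefix.
by rewrite committed in aborted.
Qed.
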